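(* Fix $c_0,c_1\ge 0$. Suppose that $\varepsilon=(\varepsilon_0,\varepsilon_1)=(0,0)$ with probability one. Then the estimator is incentive compatible: for every $(\beta_0,\beta_1)\in\mathbb{R}^2$ and all $x,r\in\{0,1\}$, $$\mathbb{E}_\varepsilon\big[\hat f(x)-f(x)\big]^2\le \mathbb{E}_\varepsilon\big[\hat f(r)-f(x)\big]^2 .$$
   Context: Setting: an agent has a binary characteristic $x\in\{0,1\}$ and ideal action $f(x)=\beta_0+\beta_1x$, with unknown parameters $\beta=(\beta_0,\beta_1)$. A statistician observes $y_x=f(x)+\varepsilon_x$ for $x=0,1$, where $\varepsilon_0,\varepsilon_1$ are i.i.d. with mean zero, and computes $(b_0,b_1)=(b_0(\varepsilon,\beta),b_1(\varepsilon,\beta))$ solving $\min_{b_0,b_1}\sum_{x=0,1}(y_x-b_0-b_1x)^2+c_0\mathbf{1}_{b_1\neq0}+c_1|b_1|$, breaking indifference between including ($b_1\ne 0$) and excluding ($b_1=0$) in favor of inclusion. Given the agent's report $r\in\{0,1\}$ the statistician takes the action $\hat f(r)=b_0+b_1r$; the agent's payoff is $-(\hat f(r)-f(x))^2$. The estimator is called incentive compatible if the displayed inequality holds for every $\beta$ and all $x,r\in\{0,1\}$. *)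

From HB Require Import structures.
From mathcomp Require Import all_boot all_order all_algebra.
From mathcomp Require Import all_classical all_reals all_analysis.
Set Implicit Arguments. Unset Strict Implicit. Unset Printing Implicit Defensive.
Import Order.TTheory GRing.Theory Num.Theory.
Local Open Scope ring_scope.

Definition lin (R : realType) (a0 a1 : R) (x : bool) : R := a0 + a1 * (x%:R).

Definition pobj (R : realType) (c0 c1 y0 y1 b0 b1 : R) : R :=
  (y0 - lin b0 b1 false) ^+ 2 + (y1 - lin b0 b1 true) ^+ 2
  + c0 * (b1 != 0)%:R + c1 * `|b1|.

(* (b0, b1) is the statistician's estimate: it minimizes the objective, and
   indifference between including (b1 <> 0) and excluding (b1 = 0) is broken
   in favor of inclusion, i.e. an excluding estimate is chosen only if no
   including pair attains the minimum. *)
Definition is_estimate (R : realType) (c0 c1 y0 y1 b0 b1 : R) : Prop :=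
  (forall a0 a1 : R, pobj c0 c1 y0 y1 b0 b1 <= pobj c0 c1 y0 y1 a0 a1) /\
  (b1 = 0 -> forall a0 a1 : R, a1 != 0 ->
     pobj c0 c1 y0 y1 b0 b1 < pobj c0 c1 y0 y1 a0 a1).

From HB Require Import structures.
From mathcomp Require Import all_boot all_order all_algebra.
From mathcomp Require Import all_classical all_reals all_analysis.
From mathcomp Require Import measurable_realfun lra.
Import Order.TTheory GRing.Theory Num.Theory HBNNSimple.
Local Open Scope ring_scope.

(* With zero noise the estimate is almost surely the penalized fit (b0, b1)
   of the exact data.  Minimality in the intercept makes the two fitting
   errors opposite, (beta1 - b1)/2 at x = 0 and (b1 - beta1)/2 at x = 1,
   while misreporting yields an error of size |beta1 + b1|/2.  The penalty
   only sees |b1|, so comparing with the fit of slope -b1 gives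
   (beta1 - b1)^2 <= (beta1 + b1)^2, which is exactly the incentive
   inequality. *)

Section ae_monotone_integral.
Local Open Scope classical_set_scope.
Local Open Scope ereal_scope.
Context d (T : measurableType d) (R : realType).
Variable mu : {measure set T -> \bar R}.

(* No measurability is assumed: the estimator in the theorem is an arbitrary
   function of the noise. *)

Lemma ge0_le_integralT (f g : T -> \bar R) :
  (forall x, 0 <= f x) -> (forall x, f x <= g x) ->
  \int[mu]_x f x <= \int[mu]_x g x.
Proof.
move=> f0 fg; have g0 x : 0 <= g x := le_trans (f0 x) (fg x).
rewrite !ge0_integralTE//; apply: ereal_sup_le => _ [h hf <-].
by exists h => // x; exact: le_trans (hf x) (fg x).
Qed.

Lemma ae_ge0_le_integralT (f g : T -> \bar R) :
  (forall x, 0 <= f x) -> (forall x, 0 <= g x) ->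
  {ae mu, forall x, f x <= g x} -> \int[mu]_x f x <= \int[mu]_x g x.
Proof.
move=> f0 g0 [N [mN muN fgN]].
rewrite [X in X <= _]ge0_integralTE//; apply: ge_ereal_sup => _ [h /= hf <-].
have mh : measurable_fun setT (EFin \o h) by exact/measurable_EFinP.
rewrite -integralT_nnsfun (ge0_negligible_integral _ _ _ _ muN)//; last first.
  by move=> x _; rewrite lee_fin.
rewrite setTD integral_mkcond; apply: ge0_le_integralT => x.
  by rewrite /patch; case: ifP; rewrite // lee_fin.
rewrite /patch; case: ifPn => [/set_mem Nx|_]; last exact: g0.
apply: le_trans (hf x) _; apply/negPn/negP => /negP fgx; exact: Nx (fgN x fgx).
Qed.

End ae_monotone_integral.

Section penalized_fit_of_a_line.
Variables (R : realType) (c0 c1 beta0 beta1 b0 b1 : R).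

Local Notation obj := (pobj c0 c1 (lin beta0 beta1 false) (lin beta0 beta1 true)).

Hypothesis b_min : forall a0 a1 : R, obj b0 b1 <= obj a0 a1.

Lemma pobj_min_errors_cancel :
  (b0 - beta0) + (b0 + b1 - (beta0 + beta1)) = 0.
Proof.
have := b_min ((beta0 + (beta0 + beta1) - b1) / 2) b1.
by rewrite /pobj /lin /= !mulr0 !mulr1 !addr0; nra.
Qed.

Lemma pobj_min_slope_sign : 0 <= b1 * beta1.
Proof.
have := b_min ((beta0 + (beta0 + beta1) + b1) / 2) (- b1).
rewrite /pobj /lin /= !mulr0 !mulr1 !addr0 oppr_eq0 normrN.
have := pobj_min_errors_cancel; nra.
Qed.

Lemma pobj_min_truthful_report (x r : bool) :
  (lin b0 b1 x - lin beta0 beta1 x) ^+ 2 <= (lin b0 b1 r - lin beta0 beta1 x) ^+ 2.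
Proof.
have := pobj_min_errors_cancel; have := pobj_min_slope_sign.
by case: x; case: r; rewrite /lin /= ?mulr0 ?mulr1 ?addr0; nra.
Qed.

End penalized_fit_of_a_line.

Theorem claim1 (R : realType) (d : measure_display) (T : measurableType d)
  (P : probability T R) (c0 c1 : R) (hc0 : 0 <= c0) (hc1 : 0 <= c1)
  (eps0 eps1 : {RV P >-> R})
  (heps : {ae P, forall w, eps0 w = 0 /\ eps1 w = 0})
  (b : R -> R -> R -> R -> R * R)
  (hb : forall e0 e1 beta0 beta1 : R,
      is_estimate c0 c1 (lin beta0 beta1 false + e0) (lin beta0 beta1 true + e1)
        (b e0 e1 beta0 beta1).1 (b e0 e1 beta0 beta1).2) :
  forall (beta0 beta1 : R) (x r : bool),
    ('E_P[fun w => ((lin (b (eps0 w) (eps1 w) beta0 beta1).1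
                        (b (eps0 w) (eps1 w) beta0 beta1).2 x
                    - lin beta0 beta1 x) ^+ 2)%R]
     <= 'E_P[fun w => ((lin (b (eps0 w) (eps1 w) beta0 beta1).1
                          (b (eps0 w) (eps1 w) beta0 beta1).2 r
                      - lin beta0 beta1 x) ^+ 2)%R])%E.
Proof.
move=> beta0 beta1 x r; rewrite unlock.
have [b_min _] := hb 0 0 beta0 beta1; rewrite !addr0 in b_min.
apply: ae_ge0_le_integralT => [w|w|]; [by rewrite lee_fin sqr_ge0..|].
apply: filterS heps => w [-> ->]; rewrite lee_fin.
exact: pobj_min_truthful_report.
Qed.
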